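(* Let $p\in\mathbb{N}$, $A>0$, and let $\alpha_1,\dots,\alpha_p,\beta_1,\dots,\beta_p$ be real numbers such that $0<\alpha_1\le\dots\le\alpha_p$, $0<\beta_1\le\dots\le\beta_p$, $\sum_{j=1}^k\beta_j-\sum_{j=1}^k\alpha_j\ge0$ for $k=1,\dots,p$, and $\sum_{j=1}^p(\beta_j-\alpha_j)>0$. Then the function $$z\mapsto{}_p\Psi_p\Big[_{(\beta_1,A),\dots,(\beta_p,A)}^{(\alpha_1,A),\dots,(\alpha_p,A)}\Big|-z\Big]$$ is completely monotonic on $(0,\infty)$.
   Context: The Fox-Wright function is ${}_p\Psi_p\Big[_{(\beta_1,A),\dots,(\beta_p,A)}^{(\alpha_1,A),\dots,(\alpha_p,A)}\Big|z\Big]=\sum_{k=0}^\infty\prod_{i=1}^p\frac{\Gamma(\alpha_i+kA)}{\Gamma(\beta_i+kA)}\frac{z^k}{k!}$. A function $f$ on an interval $I$ is completely monotonic if it is infinitely differentiable and $(-1)^nf^{(n)}\ge0$ on $I$ for all $n\in\mathbb{N}_0$. *)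

From Stdlib Require Import Reals List Arith Factorial.
From Coquelicot Require Import Coquelicot.
Open Scope R_scope.

Definition rsum (f : nat -> R) (n : nat) : R :=
  fold_right Rplus 0 (map f (seq 0 n)).
Definition rprod (f : nat -> R) (n : nat) : R :=
  fold_right Rmult 1 (map f (seq 0 n)).

Definition Gamma (x : R) : R :=
  RInt_gen (fun t => Rpower t (x - 1) * exp (- t))
           (at_right 0) (Rbar_locally p_infty).

(* Fox-Wright function  pPsi_p[(alpha_i, A); (beta_i, A) | z]
   = sum_k prod_{i<p} Gamma(alpha_i + k A)/Gamma(beta_i + k A) * z^k / k!
   (parameters indexed by 0 <= i < p). *)
Definition FoxWright (p : nat) (A : R) (alpha beta : nat -> R) (z : R) : R :=
  Series (fun k =>
    rprod (fun i => Gamma (alpha i + INR k * A) / Gamma (beta i + INR k * A)) p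
    * z ^ k / INR (Factorial.fact k)).

Definition completely_monotonic_pos (f : R -> R) : Prop :=
  forall (n : nat) (x : R), 0 < x ->
    ex_derive (Derive_n f n) x /\ 0 <= (-1) ^ n * Derive_n f n x.

From Stdlib Require Import Reals List Arith Lra Lia Psatz Factorial FunctionalExtensionality.
From Coquelicot Require Import Coquelicot.
Open Scope R_scope.

(** The coefficients [c_k = prod_i Gamma(alpha_i + k A) / Gamma(beta_i + k A)] form a
    completely monotone sequence: all iterated differences [((I - E)^m c)_n] are
    nonnegative.  This suffices, because [e^z (-1)^n] times the [n]-th derivative of
    [sum_k c_k (-z)^k / k!] is [sum_m ((I - E)^m c)_n z^m / m!].

    By Gauss' product formula, [c_k] is the limit as [N -> oo] of positive multiples of
    [Q_N (k A)], where [Q_N x = prod_(j <= N) prod_i (beta_i + j + x) / (alpha_i + j + x)].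
    The logarithmic derivative [- Q_N' / Q_N = sum_(j,i) (1/(alpha_i + j + x) - 1/(beta_i + j + x))]
    is completely monotonic: by Abel summation this reduces to the majorization hypothesis.
    Hence [Q_N] is completely monotonic, its samples along an arithmetic progression have
    nonnegative iterated differences, and so do their limits [c_k]. *)

Lemma rsum_0 (f : nat -> R) : rsum f 0 = 0.
Proof. reflexivity. Qed.

Lemma rsum_S (f : nat -> R) n : rsum f (S n) = rsum f n + f n.
Proof.
  unfold rsum. rewrite seq_S, map_app, fold_right_app. simpl.
  induction (map f (seq 0 n)) as [|a l IH]; simpl; [|rewrite IH]; lra.
Qed.

Lemma rprod_0 (f : nat -> R) : rprod f 0 = 1.
Proof. reflexivity. Qed.

Lemma rprod_S (f : nat -> R) n : rprod f (S n) = rprod f n * f n.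
Proof.
  unfold rprod. rewrite seq_S, map_app, fold_right_app. simpl.
  induction (map f (seq 0 n)) as [|a l IH]; simpl; [|rewrite IH]; lra.
Qed.

Lemma rsum_ext (F G : nat -> R) n :
  (forall j, (j < n)%nat -> F j = G j) -> rsum F n = rsum G n.
Proof.
  induction n; intros H; rewrite ?rsum_S; [reflexivity|].
  rewrite IHn, H; auto.
Qed.

Lemma rprod_ext (F G : nat -> R) n :
  (forall j, (j < n)%nat -> F j = G j) -> rprod F n = rprod G n.
Proof.
  induction n; intros H; rewrite ?rprod_S; [reflexivity|].
  rewrite IHn, H; auto.
Qed.

Lemma rsum_plus (F G : nat -> R) n :
  rsum (fun j => F j + G j) n = rsum F n + rsum G n.
Proof. induction n; rewrite ?rsum_0, ?rsum_S, ?IHn; lra. Qed.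

Lemma rsum_minus (F G : nat -> R) n :
  rsum (fun j => F j - G j) n = rsum F n - rsum G n.
Proof. induction n; rewrite ?rsum_0, ?rsum_S, ?IHn; lra. Qed.

Lemma rsum_scal_l c (F : nat -> R) n :
  rsum (fun j => c * F j) n = c * rsum F n.
Proof. induction n; rewrite ?rsum_0, ?rsum_S, ?IHn; lra. Qed.

Lemma rsum_shift (F : nat -> R) n :
  rsum F (S n) = F O + rsum (fun j => F (S j)) n.
Proof.
  induction n; [rewrite rsum_S, !rsum_0; lra|].
  rewrite rsum_S, IHn, rsum_S. lra.
Qed.

Lemma rprod_shift (F : nat -> R) n :
  rprod F (S n) = F O * rprod (fun j => F (S j)) n.
Proof.
  induction n; [rewrite rprod_S, !rprod_0; lra|].
  rewrite rprod_S, IHn, rprod_S. lra.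
Qed.

Lemma rprod_mult (F G : nat -> R) n :
  rprod (fun j => F j * G j) n = rprod F n * rprod G n.
Proof. induction n; rewrite ?rprod_0, ?rprod_S, ?IHn; lra. Qed.

Lemma rprod_swap (F : nat -> nat -> R) n m :
  rprod (fun i => rprod (fun j => F i j) m) n = rprod (fun j => rprod (fun i => F i j) n) m.
Proof.
  induction n; rewrite ?rprod_S, ?IHn.
  - induction m; rewrite ?rprod_S, ?rprod_0 in *; lra.
  - rewrite <- rprod_mult. apply rprod_ext. intros. now rewrite rprod_S.
Qed.

Lemma rsum_nonneg (F : nat -> R) n :
  (forall j, (j < n)%nat -> 0 <= F j) -> 0 <= rsum F n.
Proof.
  induction n; intros H; rewrite ?rsum_0, ?rsum_S; [lra|].
  assert (0 <= F n) by auto. assert (0 <= rsum F n) by auto. lra.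
Qed.

Lemma rprod_pos (F : nat -> R) n :
  (forall j, (j < n)%nat -> 0 < F j) -> 0 < rprod F n.
Proof.
  induction n; intros H; rewrite ?rprod_0, ?rprod_S; [lra|].
  apply Rmult_lt_0_compat; auto.
Qed.

Lemma rprod_inv (F : nat -> R) n :
  (forall j, (j < n)%nat -> 0 < F j) -> rprod (fun j => / F j) n = / rprod F n.
Proof.
  induction n; intros H; rewrite ?rprod_0, ?rprod_S; [field|].
  assert (0 < rprod F n) by (apply rprod_pos; auto).
  assert (0 < F n) by auto.
  rewrite IHn by auto. field. lra.
Qed.

Lemma rsum_Rabs_le (F G : nat -> R) n :
  (forall j, (j < n)%nat -> Rabs (F j) <= G j) -> Rabs (rsum F n) <= rsum G n.
Proof.
  induction n; intros H; rewrite ?rsum_0, ?rsum_S; [rewrite Rabs_R0; lra|].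
  eapply Rle_trans; [apply Rabs_triang|].
  apply Rplus_le_compat; auto.
Qed.

Lemma sum_f_R0_rsum (f : nat -> R) n : sum_f_R0 f n = rsum f (S n).
Proof. induction n; simpl sum_f_R0; rewrite rsum_S, ?IHn; [rewrite rsum_0|]; lra. Qed.

Lemma is_lim_seq_rprod (U : nat -> nat -> R) (l : nat -> R) p :
  (forall i, (i < p)%nat -> is_lim_seq (fun N => U N i) (l i)) ->
  is_lim_seq (fun N => rprod (U N) p) (rprod l p).
Proof.
  induction p; intros H.
  - apply is_lim_seq_const.
  - rewrite rprod_S. apply is_lim_seq_ext with (fun N => rprod (U N) p * U N p).
    { intros N. now rewrite rprod_S. }
    apply is_lim_seq_mult'; auto.
Qed.

Lemma C_pos n j : 0 < Binomial.C n j.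
Proof.
  unfold Binomial.C. apply Rdiv_lt_0_compat; [|apply Rmult_lt_0_compat];
  apply lt_0_INR, lt_O_fact.
Qed.

Lemma rsum_pascal (X : nat -> R) m :
  rsum (fun j => Binomial.C (S m) j * X j) (S (S m)) =
  rsum (fun j => Binomial.C m j * X j) (S m) + rsum (fun j => Binomial.C m j * X (S j)) (S m).
Proof.
  rewrite rsum_shift, rsum_S, C_n_0, C_n_n.
  rewrite (rsum_ext _ (fun j => Binomial.C m j * X (S j) + Binomial.C m (S j) * X (S j)))
    by (intros j Hj; rewrite <- pascal by lia; ring).
  rewrite rsum_plus, (rsum_shift (fun j => _ * X j)), (rsum_S (fun j => _ * X (S j))), C_n_0, C_n_n.
  lra.
Qed.

Lemma binomial_rsum y n : (1 + y) ^ n = rsum (fun i => Binomial.C n i * y ^ i) (S n).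
Proof.
  rewrite Rplus_comm, binomial, sum_f_R0_rsum. apply rsum_ext. intros. rewrite pow1. ring.
Qed.

Fixpoint fdiff (m : nat) (u : nat -> R) : nat -> R :=
  match m with O => u | S m' => fdiff m' (fun i => u i - u (S i)) end.

Lemma fdiff_ext m (u v : nat -> R) k : (forall i, u i = v i) -> fdiff m u k = fdiff m v k.
Proof.
  intros H. replace v with u by (apply functional_extensionality; auto). reflexivity.
Qed.

Lemma fdiff_scal m c (u : nat -> R) k : fdiff m (fun i => c * u i) k = c * fdiff m u k.
Proof.
  revert u. induction m; intros u; simpl; [reflexivity|].
  rewrite <- IHm. apply fdiff_ext. intros. ring.
Qed.

Lemma is_lim_seq_fdiff m (U : nat -> nat -> R) (u : nat -> R) k :
  (forall i, is_lim_seq (fun N => U N i) (u i)) ->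
  is_lim_seq (fun N => fdiff m (U N) k) (fdiff m u k).
Proof.
  revert U u. induction m; intros U u H; simpl; auto.
  apply IHm. intros i. apply is_lim_seq_minus'; auto.
Qed.

Lemma fdiff_binomial m (u : nat -> R) k :
  fdiff m u k = rsum (fun j => Binomial.C m j * ((-1) ^ j * u (k + j)%nat)) (S m).
Proof.
  revert u. induction m; intros u; simpl fdiff.
  - rewrite rsum_S, rsum_0, Nat.add_0_r, C_n_0, pow_O. ring.
  - rewrite IHm, (rsum_pascal (fun j => (-1) ^ j * u (k + j)%nat)), <- rsum_plus.
    apply rsum_ext. intros j _. rewrite Nat.add_succ_r. simpl. ring.
Qed.

(** * Towers of derivatives and complete monotonicity *)

Definition derive_tower (L : R) (D : nat -> R -> R) : Prop :=
  forall k x, L < x -> is_derive (D k) x (D (S k) x).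

Definition signs_alternate (L : R) (D : nat -> R -> R) : Prop :=
  forall k x, L < x -> 0 <= (-1) ^ k * D k x.

Lemma derive_tower_mono L L' D : L <= L' -> derive_tower L D -> derive_tower L' D.
Proof. intros HL HD k x Hx. apply HD. lra. Qed.

Lemma derive_tower_opp L D : derive_tower L D -> derive_tower L (fun k x => - D k x).
Proof. intros HD k x Hx. apply (is_derive_opp (D k)), HD, Hx. Qed.

Lemma derive_tower_minus L D E :
  derive_tower L D -> derive_tower L E -> derive_tower L (fun k x => D k x - E k x).
Proof. intros HD HE k x Hx. apply (is_derive_minus (D k) (E k)); auto. Qed.

Lemma derive_tower_sub_shift L D h :
  0 <= h -> derive_tower L D -> derive_tower L (fun k x => D k x - D k (x + h)).
Proof.
  intros Hh HD. apply derive_tower_minus; [exact HD|]. intros k x Hx.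
  replace (D (S k) (x + h)) with (1 * D (S k) (x + h)) by ring.
  apply (is_derive_comp (D k) (fun y => y + h)).
  - apply HD. lra.
  - auto_derive; auto; ring.
Qed.

Lemma is_derive_rsum (H : nat -> R -> R) (H' : nat -> R) n x :
  (forall m, (m < n)%nat -> is_derive (H m) x (H' m)) ->
  is_derive (fun y => rsum (fun m => H m y) n) x (rsum H' n).
Proof.
  induction n; intros Hd.
  - rewrite rsum_0. exact (is_derive_const 0 x).
  - rewrite rsum_S. apply is_derive_ext with (fun y => rsum (fun m => H m y) n + H n y).
    { intros y. now rewrite rsum_S. }
    apply (is_derive_plus (fun y => rsum (fun m => H m y) n) (H n)); auto.
Qed.

Lemma derive_tower_rsum L (D : nat -> nat -> R -> R) n :
  (forall m, (m < n)%nat -> derive_tower L (D m)) ->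
  derive_tower L (fun k x => rsum (fun m => D m k x) n).
Proof. intros HD k x Hx. apply is_derive_rsum. intros m Hm. apply HD; auto. Qed.

Lemma derive_tower_unique L D E :
  derive_tower L D -> derive_tower L E -> (forall x, L < x -> D O x = E O x) ->
  forall k x, L < x -> D k x = E k x.
Proof.
  intros HD HE H0 k. induction k as [|k IH]; intros x Hx; auto.
  rewrite <- (is_derive_unique (D k) x (D (S k) x)) by (apply HD, Hx).
  apply is_derive_unique, (is_derive_ext_loc (E k)); [|apply HE, Hx].
  eapply filter_imp; [|apply (open_gt L x Hx)]. intros t Ht. symmetry. apply IH, Ht.
Qed.

Definition leibniz (F G : nat -> R -> R) (k : nat) (x : R) : R :=
  rsum (fun j => Binomial.C k j * (F j x * G (k - j)%nat x)) (S k).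

Lemma leibniz_0 F G x : leibniz F G 0 x = F O x * G O x.
Proof. unfold leibniz. rewrite rsum_S, rsum_0, C_n_0, Nat.sub_0_r. ring. Qed.

Lemma derive_tower_leibniz L F G :
  derive_tower L F -> derive_tower L G -> derive_tower L (leibniz F G).
Proof.
  intros HF HG k x Hx.
  replace (leibniz F G (S k) x) with
    (rsum (fun j => Binomial.C k j *
                    (F (S j) x * G (k - j)%nat x + F j x * G (S (k - j)) x)) (S k)).
  - apply (is_derive_rsum (fun j y => Binomial.C k j * (F j y * G (k - j)%nat y))).
    intros m Hm. apply is_derive_scal.
    apply (is_derive_mult (F m) (G (k - m)%nat)); [apply HF, Hx | apply HG, Hx | apply Rmult_comm].
  - unfold leibniz.
    rewrite (rsum_pascal (fun j => F j x * G (S k - j)%nat x)), Rplus_comm, <- rsum_plus.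
    apply rsum_ext. intros j Hj. replace (S k - j)%nat with (S (k - j)) by lia. simpl. ring.
Qed.

Definition unit_tower (k : nat) (x : R) : R := match k with O => 1 | S _ => 0 end.

Fixpoint tower_rprod (F : nat -> nat -> R -> R) (n : nat) : nat -> R -> R :=
  match n with O => unit_tower | S n' => leibniz (tower_rprod F n') (F n') end.

Lemma derive_tower_rprod L F n :
  (forall m, (m < n)%nat -> derive_tower L (F m)) -> derive_tower L (tower_rprod F n).
Proof.
  induction n; intros HF; simpl.
  - intros [|k] x _; [exact (is_derive_const 1 x) | exact (is_derive_const 0 x)].
  - apply derive_tower_leibniz; auto.
Qed.

Lemma tower_rprod_0 F n x : tower_rprod F n O x = rprod (fun m => F m O x) n.
Proof. induction n; simpl; [reflexivity|]. now rewrite leibniz_0, IHn, rprod_S. Qed.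

Lemma tower_rprod_1 F g n x :
  (forall m, (m < n)%nat -> F m 1%nat x = - g m * F m O x) ->
  tower_rprod F n 1%nat x = - rsum g n * tower_rprod F n O x.
Proof.
  induction n; intros H; simpl.
  - rewrite rsum_0. ring.
  - unfold leibniz at 1. rewrite !rsum_S, rsum_0, C_n_0, C_n_n, leibniz_0, IHn, H by auto.
    simpl. ring.
Qed.

(* A positive function whose logarithmic derivative is completely monotonic is itself
   completely monotonic: differentiate [Q' = - P Q] with the Leibniz rule. *)
Lemma signs_alternate_log_derivative L P Q :
  (forall x, L < x -> 0 < Q O x) -> signs_alternate L P ->
  (forall k x, L < x -> Q (S k) x = - leibniz P Q k x) -> signs_alternate L Q.
Proof.
  intros HQ0 HP HQ k. induction k as [k IH] using lt_wf_ind. intros x Hx.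
  destruct k as [|k]; [specialize (HQ0 x Hx); simpl; lra|].
  rewrite HQ by exact Hx. unfold leibniz.
  replace ((-1) ^ S k * - rsum _ (S k)) with
    (rsum (fun j => Binomial.C k j *
                    (((-1) ^ j * P j x) * ((-1) ^ (k - j) * Q (k - j)%nat x))) (S k)).
  - apply rsum_nonneg. intros j Hj. apply Rmult_le_pos; [apply Rlt_le, C_pos|].
    apply Rmult_le_pos; [apply HP, Hx | apply IH; [lia | exact Hx]].
  - replace ((-1) ^ S k * - rsum _ (S k)) with
      ((-1) ^ k * rsum (fun j => Binomial.C k j * (P j x * Q (k - j)%nat x)) (S k))
      by (simpl; ring).
    rewrite <- rsum_scal_l. apply rsum_ext. intros j Hj.
    replace ((-1) ^ k) with ((-1) ^ j * (-1) ^ (k - j)) by (rewrite <- pow_add; f_equal; lia).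
    ring.
Qed.

Lemma signs_alternate_sub_shift L D h :
  0 <= h -> derive_tower L D -> signs_alternate L D ->
  signs_alternate L (fun k x => D k x - D k (x + h)).
Proof.
  intros Hh HD HS k x Hx.
  destruct (Req_dec h 0) as [->|Hh0]; [rewrite Rplus_0_r; lra|].
  destruct (MVT_cor3 (D k) (D (S k)) x (x + h)) as [c [Hc1 [Hc2 Hc]]]; [lra| |].
  - intros y Hy _. apply is_derive_Reals, HD. lra.
  - rewrite Hc. specialize (HS (S k) c ltac:(lra)). simpl in HS. nra.
Qed.

(* The first difference [D x - D (x + h)] is again completely monotonic, by the mean value
   theorem; induct on [m]. *)
Lemma fdiff_tower_nonneg L D h :
  L < 0 -> 0 < h -> derive_tower L D -> signs_alternate L D ->
  forall m k, 0 <= fdiff m (fun i => D O (INR i * h)) k.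
Proof.
  intros HL Hh HD HS m. revert D HD HS. induction m; intros D HD HS k; cbn [fdiff].
  - assert (0 <= INR k * h) by (apply Rmult_le_pos; [apply pos_INR | lra]).
    specialize (HS O (INR k * h) ltac:(lra)). simpl in HS. lra.
  - rewrite (fdiff_ext m _ (fun i => (fun k x => D k x - D k (x + h)) O (INR i * h))).
    + apply (IHm (fun k x => D k x - D k (x + h)));
        [apply derive_tower_sub_shift | apply signs_alternate_sub_shift]; auto; lra.
    + intros i. rewrite S_INR. do 2 f_equal. ring.
Qed.

Lemma bernoulli_ineq n w : 0 <= w -> 1 + INR n * (w - 1) <= w ^ n.
Proof.
  intros Hw. induction n; [simpl; lra|].
  rewrite S_INR. simpl.
  assert (w * (1 + INR n * (w - 1)) <= w * w ^ n) by (apply Rmult_le_compat_l; auto).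
  assert (0 <= INR n * ((w - 1) * (w - 1)))
    by (apply Rmult_le_pos; [apply pos_INR | apply Rle_0_sqr]).
  nra.
Qed.

(** * The majorization inequality *)

(* Bernoulli's inequality for [w = v / u]. *)
Lemma inv_pow_tangent_le n u v : 0 < u -> 0 < v ->
  INR (S n) / v ^ S (S n) * (v - u) <= / u ^ S n - / v ^ S n.
Proof.
  intros Hu Hv. set (w := v / u).
  assert (Hw : 0 < w) by (apply Rdiv_lt_0_compat; auto).
  replace v with (w * u) by (unfold w; field; lra).
  assert (0 < u ^ S n) by (apply pow_lt; auto).
  assert (0 < w ^ S n) by (apply pow_lt; auto).
  assert (HB := bernoulli_ineq (S (S n)) w (Rlt_le _ _ Hw)).
  rewrite !S_INR in *. rewrite !Rpow_mult_distr. simpl pow in *.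
  set (U := u * u ^ n) in *. set (W := w * w ^ n) in *.
  apply Rminus_le_0.
  match goal with |- 0 <= ?e =>
    replace e with ((w * W - w - (INR n + 1) * (w - 1)) / (w * W * U)) by (field; lra) end.
  apply Rdiv_le_0_compat; [lra|].
  apply Rmult_lt_0_compat; [apply Rmult_lt_0_compat|]; auto.
Qed.

Lemma rsum_abel_nonneg p (D d : nat -> R) :
  (forall i, (i + 1 < p)%nat -> D (i + 1)%nat <= D i) -> (forall i, (i < p)%nat -> 0 <= D i) ->
  (forall k, (1 <= k <= p)%nat -> 0 <= rsum d k) -> 0 <= rsum (fun i => D i * d i) p.
Proof.
  intros HD HD0 Hd.
  assert (Habel : forall n, (S n <= p)%nat ->
                    D n * rsum d (S n) <= rsum (fun i => D i * d i) (S n)).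
  { induction n; intros Hn; [rewrite !rsum_S, !rsum_0; lra|].
    rewrite (rsum_S d (S n)), (rsum_S (fun i => D i * d i) (S n)).
    assert (D (S n) <= D n) by (replace (S n) with (n + 1)%nat by lia; apply HD; lia).
    assert (0 <= rsum d (S n)) by (apply Hd; lia).
    specialize (IHn ltac:(lia)). nra. }
  destruct p as [|p]; [rewrite rsum_0; lra|].
  specialize (Habel p (le_n _)).
  assert (0 <= D p) by (apply HD0; lia). assert (0 <= rsum d (S p)) by (apply Hd; lia). nra.
Qed.

(* Abel summation against the decreasing weights [(k+1) / (b_i + y)^(k+2)] turns the
   majorization [sum_{j<k} a_j <= sum_{j<k} b_j] into the inequality via the tangent bound. *)
Lemma rsum_inv_pow_majorization p (a b : nat -> R) k y :
  (forall i, (i < p)%nat -> 0 < a i + y) -> (forall i, (i < p)%nat -> 0 < b i + y) ->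
  (forall i, (i + 1 < p)%nat -> b i <= b (i + 1)%nat) ->
  (forall k, (1 <= k <= p)%nat -> rsum b k - rsum a k >= 0) ->
  0 <= rsum (fun i => / (a i + y) ^ S k - / (b i + y) ^ S k) p.
Proof.
  intros Ha Hb Hbs Hs.
  apply Rle_trans with (rsum (fun i => INR (S k) / (b i + y) ^ S (S k) * (b i - a i)) p).
  - apply rsum_abel_nonneg.
    + intros i Hi. apply Rmult_le_compat_l; [apply pos_INR|].
      apply Rinv_le_contravar; [apply pow_lt, Hb; lia|].
      apply pow_incr. specialize (Hbs i Hi). specialize (Hb i ltac:(lia)). lra.
    + intros i Hi. apply Rdiv_le_0_compat; [apply pos_INR | apply pow_lt, Hb, Hi].
    + intros j Hj. rewrite rsum_minus. specialize (Hs j Hj). lra.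
  - apply Rminus_le_0. rewrite <- rsum_minus. apply rsum_nonneg. intros i Hi.
    assert (H := inv_pow_tangent_le k (a i + y) (b i + y) (Ha i Hi) (Hb i Hi)).
    replace (b i + y - (a i + y)) with (b i - a i) in H by ring. lra.
Qed.

(** * Gauss products *)

Definition inv_tower (c : R) (k : nat) (x : R) : R :=
  (-1) ^ k * INR (fact k) / (c + x) ^ S k.

Lemma derive_tower_inv c : derive_tower (- c) (inv_tower c).
Proof.
  intros k x Hx. unfold inv_tower.
  assert ((c + x) ^ k <> 0) by (apply pow_nonzero; lra).
  auto_derive.
  - apply Rmult_integral_contrapositive. split; lra.
  - rewrite fact_simpl, mult_INR, S_INR. simpl.
    replace (match k with O => 1 | S _ => INR k + 1 end) with (INR k + 1)
      by (destruct k; simpl; ring).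
    field. split; lra.
Qed.

Definition ratio_tower (c d : R) (k : nat) (x : R) : R :=
  match k with O => (d + x) / (c + x) | S _ => (d - c) * inv_tower c k x end.

Lemma derive_tower_ratio c d : derive_tower (- c) (ratio_tower c d).
Proof.
  intros [|k] x Hx.
  - unfold ratio_tower, inv_tower. auto_derive; [lra|]. simpl. field. lra.
  - apply is_derive_scal, derive_tower_inv, Hx.
Qed.

Lemma ratio_tower_1 c d x : 0 < c + x -> 0 < d + x ->
  ratio_tower c d 1%nat x = - (/ (c + x) - / (d + x)) * ratio_tower c d O x.
Proof. intros. unfold ratio_tower, inv_tower. simpl. field. lra. Qed.

Section GaussProduct.

Variables (p N : nat) (a b : nat -> R) (d : R).
Hypothesis Hd : 0 < d.
Hypothesis Ha : forall i, (i < p)%nat -> d < a i.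
Hypothesis Hb : forall i, (i < p)%nat -> d < b i.
Hypothesis Hbs : forall i, (i + 1 < p)%nat -> b i <= b (i + 1)%nat.
Hypothesis Hs : forall k, (1 <= k <= p)%nat -> rsum b k - rsum a k >= 0.

Definition gauss_prod : nat -> R -> R :=
  tower_rprod (fun j => tower_rprod (fun i => ratio_tower (a i + INR j) (b i + INR j)) p) (S N).

Definition gauss_logderiv (k : nat) (x : R) : R :=
  rsum (fun j => rsum (fun i => inv_tower (a i + INR j) k x - inv_tower (b i + INR j) k x) p) (S N).

Lemma derive_tower_gauss_prod : derive_tower (- d) gauss_prod.
Proof.
  apply derive_tower_rprod. intros j _. apply derive_tower_rprod. intros i Hi.
  apply derive_tower_mono with (- (a i + INR j)); [|apply derive_tower_ratio].
  specialize (Ha i Hi). assert (0 <= INR j) by apply pos_INR. lra.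
Qed.

Lemma derive_tower_gauss_logderiv : derive_tower (- d) gauss_logderiv.
Proof.
  apply derive_tower_rsum with (D := fun j k x => rsum (fun i => _) p). intros j _.
  apply derive_tower_rsum with (D := fun i k x => _ - _). intros i Hi.
  specialize (Ha i Hi). specialize (Hb i Hi). assert (0 <= INR j) by apply pos_INR.
  apply derive_tower_minus.
  - apply derive_tower_mono with (- (a i + INR j)); [lra | apply derive_tower_inv].
  - apply derive_tower_mono with (- (b i + INR j)); [lra | apply derive_tower_inv].
Qed.

Lemma signs_alternate_gauss_logderiv : signs_alternate (- d) gauss_logderiv.
Proof.
  intros k x Hx. unfold gauss_logderiv. rewrite <- rsum_scal_l. apply rsum_nonneg. intros j _.
  assert (0 <= INR j) by apply pos_INR.
  rewrite <- rsum_scal_l.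
  replace (rsum _ p) with
    (INR (fact k) * rsum (fun i => / (a i + (x + INR j)) ^ S k - / (b i + (x + INR j)) ^ S k) p).
  - apply Rmult_le_pos; [apply pos_INR|]. apply rsum_inv_pow_majorization; auto.
    + intros i Hi. specialize (Ha i Hi). lra.
    + intros i Hi. specialize (Hb i Hi). lra.
  - rewrite <- rsum_scal_l. apply rsum_ext. intros i _. unfold inv_tower.
    replace (a i + INR j + x) with (a i + (x + INR j)) by ring.
    replace (b i + INR j + x) with (b i + (x + INR j)) by ring.
    assert (Hsq : (-1) ^ k * (-1) ^ k = 1)
      by (rewrite <- pow_add; replace (k + k)%nat with (2 * k)%nat by lia; apply pow_1_even).
    replace (INR (fact k)) with ((-1) ^ k * (-1) ^ k * INR (fact k)) at 1 by (rewrite Hsq; ring).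
    unfold Rdiv. ring.
Qed.

Lemma gauss_prod_0 x :
  gauss_prod O x = rprod (fun j => rprod (fun i => (b i + INR j + x) / (a i + INR j + x)) p) (S N).
Proof.
  unfold gauss_prod. rewrite tower_rprod_0. apply rprod_ext. intros j _. now rewrite tower_rprod_0.
Qed.

Lemma gauss_prod_pos x : - d < x -> 0 < gauss_prod O x.
Proof.
  intros Hx. rewrite gauss_prod_0. apply rprod_pos. intros j _. apply rprod_pos. intros i Hi.
  specialize (Ha i Hi). specialize (Hb i Hi). assert (0 <= INR j) by apply pos_INR.
  apply Rdiv_lt_0_compat; lra.
Qed.

Lemma gauss_prod_log_derivative k x :
  - d < x -> gauss_prod (S k) x = - leibniz gauss_logderiv gauss_prod k x.
Proof.
  revert k x.
  apply (derive_tower_unique (- d) (fun k => gauss_prod (S k))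
           (fun k x => - leibniz gauss_logderiv gauss_prod k x)).
  - intros k x Hx. apply derive_tower_gauss_prod, Hx.
  - apply derive_tower_opp, derive_tower_leibniz;
      [apply derive_tower_gauss_logderiv | apply derive_tower_gauss_prod].
  - intros x Hx.
    assert (Hlog : gauss_logderiv O x =
      rsum (fun j => rsum (fun i => / (a i + INR j + x) - / (b i + INR j + x)) p) (S N)).
    { apply rsum_ext. intros j _. apply rsum_ext. intros i Hi.
      specialize (Ha i Hi). specialize (Hb i Hi). assert (0 <= INR j) by apply pos_INR.
      unfold inv_tower. simpl. field. split; lra. }
    rewrite leibniz_0, Hlog. unfold gauss_prod.
    rewrite (tower_rprod_1 _
               (fun j => rsum (fun i => / (a i + INR j + x) - / (b i + INR j + x)) p)); [ring|].
    intros j _. apply tower_rprod_1. intros i Hi.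
    specialize (Ha i Hi). specialize (Hb i Hi). assert (0 <= INR j) by apply pos_INR.
    apply ratio_tower_1; lra.
Qed.

Lemma fdiff_gauss_prod_nonneg h : 0 < h ->
  forall m k, 0 <= fdiff m (fun i => gauss_prod O (INR i * h)) k.
Proof.
  intros Hh. apply (fdiff_tower_nonneg (- d)); [lra | exact Hh | apply derive_tower_gauss_prod|].
  apply signs_alternate_log_derivative with gauss_logderiv.
  - apply gauss_prod_pos.
  - apply signs_alternate_gauss_logderiv.
  - intros k x Hx. apply gauss_prod_log_derivative, Hx.
Qed.

End GaussProduct.

(** * The Gamma function *)

Lemma continuous_of_ex_derive (f : R -> R) x : ex_derive f x -> continuous f x.
Proof. apply (ex_derive_continuous (K := R_AbsRing) (V := R_NormedModule)). Qed.

Lemma exp_le_compat x y : x <= y -> exp x <= exp y.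
Proof. intros [H | ->]; [apply Rlt_le, exp_increasing, H | apply Rle_refl]. Qed.

Lemma Rpower_pos t y : 0 < Rpower t y.
Proof. apply exp_pos. Qed.

Lemma is_derive_Rpower t y : 0 < t -> is_derive (fun s => Rpower s y) t (y * Rpower t (y - 1)).
Proof. intros Ht. apply is_derive_Reals, derivable_pt_lim_power, Ht. Qed.

Lemma continuous_Rpower t y : 0 < t -> continuous (fun s => Rpower s y) t.
Proof. intros Ht. apply continuous_of_ex_derive. eexists. apply is_derive_Rpower, Ht. Qed.

Lemma RInt_is_derive (F f : R -> R) a b : a <= b ->
  (forall t, a <= t <= b -> is_derive F t (f t)) -> (forall t, a <= t <= b -> continuous f t) ->
  RInt f a b = F b - F a.
Proof.
  intros Hab HF Hf. apply is_RInt_unique.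
  apply (is_RInt_derive (V := R_CompleteNormedModule) F f); intros t Ht;
    rewrite Rmin_left, Rmax_right in Ht by lra; auto.
Qed.

Section NonnegIntegral.

Variable f : R -> R.
Hypothesis f_cont : forall t, 0 < t -> continuous f t.
Hypothesis f_nonneg : forall t, 0 < t -> 0 <= f t.

Lemma ex_RInt_pos e M : 0 < e -> 0 < M -> ex_RInt f e M.
Proof.
  intros He HM. apply (ex_RInt_continuous (V := R_CompleteNormedModule)). intros z Hz.
  apply f_cont. assert (0 < Rmin e M) by (apply Rmin_glb_lt; auto). lra.
Qed.

Lemma RInt_widen e e' M M' : 0 < e' -> e' <= e -> e <= M -> M <= M' -> RInt f e M <= RInt f e' M'.
Proof.
  intros H1 H2 H3 H4.
  rewrite <- (RInt_Chasles f e' e M'), <- (RInt_Chasles f e M M'); try (apply ex_RInt_pos; lra).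
  assert (0 <= RInt f e' e)
    by (apply RInt_ge_0; [lra | apply ex_RInt_pos; lra | intros; apply f_nonneg; lra]).
  assert (0 <= RInt f M M')
    by (apply RInt_ge_0; [lra | apply ex_RInt_pos; lra | intros; apply f_nonneg; lra]).
  unfold plus. simpl. lra.
Qed.

(* The integrals over [[1/(n+1), n+1]] increase to the supremum. *)
Lemma RInt_sup_exists B :
  (forall e M, 0 < e -> e <= M -> RInt f e M <= B) ->
  exists L, (forall e M, 0 < e -> e <= M -> RInt f e M <= L) /\
    (forall r, 0 < r -> exists e M, 0 < e /\ e <= M /\ L - r < RInt f e M).
Proof.
  intros HB.
  set (u := fun n : nat => RInt f (/ (INR n + 1)) (INR n + 1)).
  assert (Hpos : forall n, 0 < INR n + 1) by (intros n; pose proof (pos_INR n); lra).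
  assert (Hle : forall n, / (INR n + 1) <= INR n + 1).
  { intros n. pose proof (pos_INR n). apply Rle_trans with 1; [|lra].
    rewrite <- Rinv_1. apply Rinv_le_contravar; lra. }
  assert (Hinc : forall n, u n <= u (S n)).
  { intros n. unfold u. rewrite S_INR. specialize (Hpos n).
    apply RInt_widen; [apply Rinv_0_lt_compat | apply Rinv_le_contravar | apply Hle |]; lra. }
  destruct (ex_finite_lim_seq_incr u B Hinc) as [L HL].
  { intros n. apply HB; [apply Rinv_0_lt_compat, Hpos | apply Hle]. }
  exists L. split.
  - intros e M He HeM. destruct (INR_unbounded (Rmax M (/ e))) as [n Hn].
    pose proof (Rmax_l M (/ e)). pose proof (Rmax_r M (/ e)).
    apply Rle_trans with (u n); [|apply is_lim_seq_incr_compare; auto].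
    apply RInt_widen; [apply Rinv_0_lt_compat, Hpos | | exact HeM | lra].
    rewrite <- (Rinv_inv e). apply Rinv_le_contravar; [apply Rinv_0_lt_compat|]; lra.
  - intros r Hr. apply is_lim_seq_spec in HL. destruct (HL (mkposreal r Hr)) as [n Hn].
    specialize (Hn n (le_n _)). simpl in Hn. apply Rabs_lt_between' in Hn.
    exists (/ (INR n + 1)), (INR n + 1).
    split; [apply Rinv_0_lt_compat, Hpos|]. split; [apply Hle | unfold u in Hn; lra].
Qed.

Lemma is_RInt_gen_sup L :
  (forall e M, 0 < e -> e <= M -> RInt f e M <= L) ->
  (forall r, 0 < r -> exists e M, 0 < e /\ e <= M /\ L - r < RInt f e M) ->
  is_RInt_gen f (at_right 0) (Rbar_locally p_infty) L.
Proof.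
  intros Hsup Happrox P [r HP].
  destruct (Happrox r (cond_pos r)) as [e0 [M0 [He0 [HeM0 Hr]]]].
  apply Filter_prod with (Q := fun e => 0 < e < e0) (R := fun M => M0 < M).
  - exists (mkposreal _ He0). intros y Hy Hy0.
    change (Rabs (y - 0) < e0) in Hy. rewrite Rminus_0_r in Hy. apply Rabs_lt_between in Hy. lra.
  - exists M0. auto.
  - intros e M [He1 He2] HM. exists (RInt f e M). split.
    + apply (RInt_correct (V := R_CompleteNormedModule)), ex_RInt_pos; lra.
    + apply HP. change (Rabs (RInt f e M - L) < r). apply Rabs_lt_between'. split.
      * apply Rlt_le_trans with (RInt f e0 M0); [exact Hr | apply RInt_widen; lra].
      * pose proof (Hsup e M He1 ltac:(lra)). pose proof (cond_pos r). lra.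
Qed.

End NonnegIntegral.

Definition Gamma_integrand (x t : R) : R := Rpower t (x - 1) * exp (- t).

Lemma Gamma_integrand_cont x t : 0 < t -> continuous (Gamma_integrand x) t.
Proof.
  intros Ht. apply continuous_of_ex_derive. unfold Gamma_integrand, Rpower. auto_derive. exact Ht.
Qed.

Lemma Gamma_integrand_nonneg x t : 0 <= Gamma_integrand x t.
Proof. apply Rlt_le, Rmult_lt_0_compat; [apply Rpower_pos | apply exp_pos]. Qed.

(* [t <= 2 c e^(t / 2c)] since [e^s >= 1 + s]; raise it to the power [c]. *)
Lemma Rpower_le_exp_half c : exists K, 0 < K /\ forall t, 1 <= t -> Rpower t c <= K * exp (t / 2).
Proof.
  destruct (Rle_or_lt c 0) as [Hc|Hc].
  - exists 1. split; [lra|]. intros t Ht. rewrite Rmult_1_l. apply exp_le_compat.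
    assert (0 <= ln t) by (rewrite <- ln_1; apply ln_le; lra). nra.
  - exists (Rpower (2 * c) c). split; [apply Rpower_pos|]. intros t Ht.
    assert (Hbound : t <= 2 * c * exp (t / (2 * c))).
    { pose proof (exp_ineq1_le (t / (2 * c))).
      replace t with (2 * c * (t / (2 * c))) at 1 by (field; lra). nra. }
    apply Rle_trans with (Rpower (2 * c * exp (t / (2 * c))) c); [apply Rle_Rpower_l; lra|].
    rewrite <- Rpower_mult_distr by (pose proof (exp_pos (t / (2 * c))); lra).
    unfold Rpower at 2. rewrite ln_exp. right. f_equal. f_equal. field. lra.
Qed.

Lemma ex_RInt_Gamma_integrand x e M : 0 < e -> 0 < M -> ex_RInt (Gamma_integrand x) e M.
Proof. apply ex_RInt_pos, Gamma_integrand_cont. Qed.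

Lemma RInt_Gamma_integrand_head x e : 0 < x -> 0 < e <= 1 -> RInt (Gamma_integrand x) e 1 <= / x.
Proof.
  intros Hx He. apply Rle_trans with (RInt (fun t => Rpower t (x - 1)) e 1).
  - apply RInt_le; [lra | apply ex_RInt_Gamma_integrand; lra | |].
    + apply (ex_RInt_continuous (V := R_CompleteNormedModule)). intros z Hz.
      rewrite Rmin_left in Hz by lra. apply continuous_Rpower. lra.
    + intros t Ht. unfold Gamma_integrand. pose proof (Rpower_pos t (x - 1)).
      assert (exp (- t) <= 1) by (rewrite <- exp_0; apply exp_le_compat; lra). nra.
  - rewrite (RInt_is_derive (fun t => Rpower t x / x)); [| lra | |].
    + unfold Rpower at 1. rewrite ln_1, Rmult_0_r, exp_0. pose proof (Rpower_pos e x).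
      pose proof (Rinv_0_lt_compat x Hx). unfold Rdiv. nra.
    + intros t Ht. apply (is_derive_ext (fun s => / x * Rpower s x)); [intros s; apply Rmult_comm|].
      replace (Rpower t (x - 1)) with (/ x * (x * Rpower t (x - 1))) by (field; lra).
      apply (is_derive_scal (fun s => Rpower s x)), is_derive_Rpower. lra.
    + intros t Ht. apply continuous_Rpower. lra.
Qed.

Lemma RInt_Gamma_integrand_tail x K M :
  (forall t, 1 <= t -> Rpower t (x - 1) <= K * exp (t / 2)) -> 0 < K -> 1 <= M ->
  RInt (Gamma_integrand x) 1 M <= 2 * K.
Proof.
  intros HK HK0 HM. apply Rle_trans with (RInt (fun t => K * exp (- (t / 2))) 1 M).
  - apply RInt_le; [lra | apply ex_RInt_Gamma_integrand; lra | |].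
    + apply (ex_RInt_continuous (V := R_CompleteNormedModule)). intros z _.
      apply continuous_of_ex_derive. auto_derive. exact I.
    + intros t Ht. unfold Gamma_integrand. specialize (HK t ltac:(lra)).
      replace (- (t / 2)) with (t / 2 + - t) by field. rewrite exp_plus, <- Rmult_assoc.
      apply Rmult_le_compat_r; [apply Rlt_le, exp_pos | exact HK].
  - rewrite (RInt_is_derive (fun t => - 2 * K * exp (- (t / 2)))); [| lra | |].
    + pose proof (exp_pos (- (M / 2))).
      pose proof (exp_le_compat (- (1 / 2)) 0 ltac:(lra)) as Hhalf. rewrite exp_0 in Hhalf.
      assert (K * exp (- (1 / 2)) <= K * 1) by (apply Rmult_le_compat_l; lra).
      assert (0 <= K * exp (- (M / 2))) by (apply Rmult_le_pos; lra).
      lra.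
    + intros t _. auto_derive; [exact I|]. unfold Rdiv. field.
    + intros t _. apply continuous_of_ex_derive. auto_derive. exact I.
Qed.

Lemma RInt_Gamma_integrand_bounded x : 0 < x ->
  exists B, forall e M, 0 < e -> e <= M -> RInt (Gamma_integrand x) e M <= B.
Proof.
  intros Hx. destruct (Rpower_le_exp_half (x - 1)) as [K [HK0 HK]].
  exists (/ x + 2 * K). intros e M He HM.
  set (e' := Rmin e 1). set (M' := Rmax M 1).
  assert (0 < e') by (apply Rmin_glb_lt; lra).
  assert (e' <= 1) by apply Rmin_r. assert (1 <= M') by apply Rmax_r.
  apply Rle_trans with (RInt (Gamma_integrand x) e' M').
  { apply RInt_widen; [apply Gamma_integrand_cont | intros; apply Gamma_integrand_nonneg
                      | lra | apply Rmin_l | lra | apply Rmax_l]. }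
  rewrite <- (RInt_Chasles (Gamma_integrand x) e' 1 M') by (apply ex_RInt_Gamma_integrand; lra).
  pose proof (RInt_Gamma_integrand_head x e' Hx ltac:(lra)).
  pose proof (RInt_Gamma_integrand_tail x K M' HK HK0 ltac:(lra)).
  unfold plus. simpl. lra.
Qed.

Lemma Gamma_is_sup x : 0 < x ->
  (forall e M, 0 < e -> e <= M -> RInt (Gamma_integrand x) e M <= Gamma x) /\
  (forall r, 0 < r -> exists e M, 0 < e /\ e <= M /\ Gamma x - r < RInt (Gamma_integrand x) e M).
Proof.
  intros Hx. destruct (RInt_Gamma_integrand_bounded x Hx) as [B HB].
  destruct (RInt_sup_exists (Gamma_integrand x) (Gamma_integrand_cont x)
              (fun t _ => Gamma_integrand_nonneg x t) B HB) as [L [Hsup Happrox]].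
  assert (HL := is_RInt_gen_sup (Gamma_integrand x) (Gamma_integrand_cont x)
                  (fun t _ => Gamma_integrand_nonneg x t) L Hsup Happrox).
  replace (Gamma x) with L; [split; assumption|]. symmetry.
  exact (@is_RInt_gen_unique R_CompleteNormedModule (at_right 0) (Rbar_locally p_infty)
           (Proper_StrongProper _ (at_right_proper_filter 0))
           (Proper_StrongProper _ (Rbar_locally_filter p_infty)) _ _ HL).
Qed.

Lemma Gamma_pos x : 0 < x -> 0 < Gamma x.
Proof.
  intros Hx. destruct (Gamma_is_sup x Hx) as [Hsup _].
  apply Rlt_le_trans with (RInt (Gamma_integrand x) (1 / 2) 2); [|apply Hsup; lra].
  apply RInt_gt_0; [lra | | intros t Ht; apply Gamma_integrand_cont; lra].
  intros t _. apply Rmult_lt_0_compat; [apply Rpower_pos | apply exp_pos].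
Qed.

(** * Gauss' limit formula *)

Lemma rsum_binomial_alt_inv n : forall x, 0 < x ->
  rsum (fun i => Binomial.C n i * (-1) ^ i / (x + INR i)) (S n) =
  INR (fact n) / rprod (fun j => x + INR j) (S n).
Proof.
  induction n as [|n IH]; intros x Hx.
  - rewrite rsum_S, rsum_0, rprod_S, rprod_0, C_n_0. simpl. field. lra.
  - assert (Hstep : rsum (fun i => Binomial.C (S n) i * (-1) ^ i / (x + INR i)) (S (S n)) =
      rsum (fun i => Binomial.C n i * (-1) ^ i / (x + INR i)) (S n) -
      rsum (fun i => Binomial.C n i * (-1) ^ i / (x + 1 + INR i)) (S n)).
    { rewrite (rsum_ext _ (fun i => Binomial.C (S n) i * ((-1) ^ i / (x + INR i))))
        by (intros; unfold Rdiv; ring).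
      rewrite rsum_pascal, <- rsum_minus, <- rsum_plus. apply rsum_ext. intros i _.
      rewrite S_INR. replace (x + (INR i + 1)) with (x + 1 + INR i) by ring.
      simpl. unfold Rdiv. ring. }
    rewrite Hstep, !IH by lra.
    set (R0 := rprod (fun j => x + INR (S j)) n).
    assert (HR : 0 < R0).
    { apply rprod_pos. intros j _. rewrite S_INR. pose proof (pos_INR j). lra. }
    assert (P1 : rprod (fun j => x + INR j) (S n) = x * R0).
    { rewrite rprod_shift. unfold R0. simpl INR at 1. ring. }
    assert (P2 : rprod (fun j => x + 1 + INR j) (S n) = R0 * (x + 1 + INR n)).
    { rewrite rprod_S. f_equal. apply rprod_ext. intros j _. rewrite S_INR. ring. }
    rewrite (rprod_S (fun j => x + INR j) (S n)), P1, P2, fact_simpl, mult_INR, !S_INR.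
    pose proof (pos_INR n).
    field. lra.
Qed.

Lemma Rpower_plus_INR t y i : 0 < t -> Rpower t (y + INR i) = Rpower t y * t ^ i.
Proof. intros Ht. rewrite Rpower_plus, Rpower_pow; auto. Qed.

Definition gauss_integrand (x : R) (n : nat) (t : R) : R := Rpower t (x - 1) * (1 - t / INR n) ^ n.

Definition gauss_antideriv (x : R) (n : nat) (t : R) : R :=
  rsum (fun i => Binomial.C n i * (- / INR n) ^ i * (Rpower t (x + INR i) / (x + INR i))) (S n).

Lemma is_derive_gauss_antideriv x n t : 0 < x -> 0 < t ->
  is_derive (gauss_antideriv x n) t (gauss_integrand x n t).
Proof.
  intros Hx Ht. unfold gauss_antideriv.
  replace (gauss_integrand x n t) with
    (rsum (fun i => Binomial.C n i * (- / INR n) ^ i *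
                    ((x + INR i) * Rpower t (x + INR i - 1) / (x + INR i))) (S n)).
  - apply (is_derive_rsum
             (fun i y => Binomial.C n i * (- / INR n) ^ i * (Rpower y (x + INR i) / (x + INR i)))).
    intros i _. apply is_derive_scal.
    apply (is_derive_ext (fun y => / (x + INR i) * Rpower y (x + INR i)));
      [intros; apply Rmult_comm|].
    replace ((x + INR i) * Rpower t (x + INR i - 1) / (x + INR i))
      with (/ (x + INR i) * ((x + INR i) * Rpower t (x + INR i - 1))) by (unfold Rdiv; ring).
    apply (is_derive_scal (fun y => Rpower y (x + INR i))), is_derive_Rpower, Ht.
  - unfold gauss_integrand. replace (1 - t / INR n) with (1 + - / INR n * t) by (unfold Rdiv; ring).
    rewrite binomial_rsum, <- rsum_scal_l. apply rsum_ext. intros i _.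
    pose proof (pos_INR i).
    replace (x + INR i - 1) with (x - 1 + INR i) by ring.
    rewrite Rpower_plus_INR, Rpow_mult_distr by exact Ht.
    field. lra.
Qed.

Lemma gauss_integrand_cont x n t : (1 <= n)%nat -> 0 < t -> continuous (gauss_integrand x n) t.
Proof.
  intros Hn Ht. apply continuous_of_ex_derive. unfold gauss_integrand, Rpower.
  assert (INR n <> 0) by (apply not_0_INR; lia). auto_derive. auto.
Qed.

Definition gauss_seq (x : R) (n : nat) : R :=
  Rpower (INR n) x * INR (fact n) / rprod (fun j => x + INR j) (S n).

Lemma gauss_antideriv_at_n x n :
  0 < x -> (1 <= n)%nat -> gauss_antideriv x n (INR n) = gauss_seq x n.
Proof.
  intros Hx Hn. unfold gauss_seq, Rdiv at 1. rewrite Rmult_assoc.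
  fold (INR (fact n) / rprod (fun j => x + INR j) (S n)).
  rewrite <- rsum_binomial_alt_inv by exact Hx.
  unfold gauss_antideriv. rewrite <- rsum_scal_l. apply rsum_ext. intros i _.
  assert (0 < INR n) by (apply lt_0_INR; lia). pose proof (pos_INR i).
  assert (INR n ^ i <> 0) by (apply pow_nonzero; lra).
  rewrite Rpower_plus_INR by lra.
  replace (- / INR n) with (-1 * / INR n) by ring. rewrite Rpow_mult_distr, pow_inv.
  field. split; lra.
Qed.

Lemma gauss_antideriv_near_0 x n : 0 < x -> (1 <= n)%nat ->
  forall r, 0 < r ->
  exists e1, 0 < e1 /\ forall e, 0 < e <= e1 -> Rabs (gauss_antideriv x n e) <= r.
Proof.
  intros Hx Hn r Hr.
  assert (Hn0 : 0 < INR n) by (apply lt_0_INR; lia).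
  set (K := rsum (fun i => Binomial.C n i * (/ INR n) ^ i / (x + INR i)) (S n)).
  assert (HK : 0 <= K).
  { apply rsum_nonneg. intros i _. pose proof (pos_INR i). pose proof (C_pos n i).
    apply Rdiv_le_0_compat; [|lra]. apply Rmult_le_pos; [lra|].
    apply pow_le, Rlt_le, Rinv_0_lt_compat, Hn0. }
  assert (Hr' : 0 < r / (K + 1)) by (apply Rdiv_lt_0_compat; lra).
  exists (Rmin 1 (Rpower (r / (K + 1)) (/ x))).
  split; [apply Rmin_glb_lt; [lra | apply Rpower_pos]|]. intros e He.
  assert (He1 : e <= 1) by (pose proof (Rmin_l 1 (Rpower (r / (K + 1)) (/ x))); lra).
  assert (Hex : Rpower e x <= r / (K + 1)).
  { replace (r / (K + 1)) with (Rpower (Rpower (r / (K + 1)) (/ x)) x)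
      by (rewrite Rpower_mult, Rinv_l, Rpower_1; lra).
    apply Rle_Rpower_l; [lra|]. pose proof (Rmin_r 1 (Rpower (r / (K + 1)) (/ x))). lra. }
  apply Rle_trans with (Rpower e x * K).
  - unfold gauss_antideriv, K. rewrite <- rsum_scal_l. apply rsum_Rabs_le. intros i _.
    pose proof (pos_INR i). pose proof (C_pos n i). pose proof (Rpower_pos e x).
    set (c := Binomial.C n i * (/ INR n) ^ i / (x + INR i)).
    assert (0 <= c).
    { apply Rdiv_le_0_compat; [|lra]. apply Rmult_le_pos; [lra|].
      apply pow_le, Rlt_le, Rinv_0_lt_compat, Hn0. }
    assert (0 <= e ^ i) by (apply pow_le; lra).
    assert (e ^ i <= 1) by (rewrite <- (pow1 i); apply pow_incr; lra).
    replace (Binomial.C n i * (- / INR n) ^ i * (Rpower e (x + INR i) / (x + INR i)))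
      with ((-1) ^ i * (c * Rpower e x * e ^ i)).
    + rewrite Rabs_mult, pow_1_abs, Rmult_1_l, Rabs_right.
      * apply Rle_trans with (c * Rpower e x * 1); [apply Rmult_le_compat_l|]; nra.
      * apply Rle_ge, Rmult_le_pos; [apply Rmult_le_pos|]; lra.
    + rewrite Rpower_plus_INR by lra. replace (- / INR n) with (-1 * / INR n) by ring.
      rewrite Rpow_mult_distr. unfold c, Rdiv. ring.
  - apply Rle_trans with (r / (K + 1) * K); [apply Rmult_le_compat_r; lra|].
    replace (r / (K + 1) * K) with (r - r / (K + 1)) by (field; lra). lra.
Qed.

Lemma exp_pow z n : exp z ^ n = exp (INR n * z).
Proof.
  induction n; [simpl; rewrite Rmult_0_l, exp_0; reflexivity|].
  rewrite S_INR. simpl. rewrite IHn, <- exp_plus. f_equal. ring.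
Qed.

Lemma exp_neg_approx n t : (1 <= n)%nat -> 0 <= t <= INR n ->
  (1 - t / INR n) ^ n <= exp (- t) /\ exp (- t) - (1 - t / INR n) ^ n <= t ^ 2 * exp (- t) / INR n.
Proof.
  intros Hn Ht. assert (Hn0 : 0 < INR n) by (apply lt_0_INR; lia).
  set (y := t / INR n).
  assert (Hy : 0 <= y <= 1).
  { unfold y. split; [apply Rdiv_le_0_compat; lra|].
    apply Rmult_le_reg_r with (INR n); [exact Hn0|].
    unfold Rdiv. rewrite Rmult_assoc, Rinv_l; lra. }
  assert (Hty : t = INR n * y) by (unfold y; field; lra).
  split.
  - replace (exp (- t)) with (exp (- y) ^ n) by (rewrite exp_pow; f_equal; lra).
    apply pow_incr. pose proof (exp_ineq1_le (- y)). lra.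
  - assert (H1 : (1 + y) * (1 - y) <= exp y * (1 - y))
      by (apply Rmult_le_compat_r; [lra | apply exp_ineq1_le]).
    assert (H2 : (1 - y * y) ^ n <= (exp y * (1 - y)) ^ n) by (apply pow_incr; nra).
    assert (H3 := bernoulli_ineq n (1 - y * y) ltac:(nra)).
    rewrite Rpow_mult_distr, exp_pow, <- Hty in H2.
    assert (H4 : 1 - t ^ 2 / INR n <= exp t * (1 - y) ^ n).
    { replace (t ^ 2 / INR n) with (INR n * (y * y)) by (rewrite Hty; field; lra). lra. }
    assert (H5 : exp (- t) * exp t = 1) by (rewrite <- exp_plus, Rplus_opp_l, exp_0; reflexivity).
    pose proof (exp_pos (- t)).
    assert (H7 : exp (- t) * (1 - t ^ 2 / INR n) <= exp (- t) * (exp t * (1 - y) ^ n))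
      by (apply Rmult_le_compat_l; lra).
    replace (exp (- t) * (exp t * (1 - y) ^ n)) with ((1 - y) ^ n) in H7
      by (rewrite <- Rmult_assoc, H5; ring).
    unfold Rdiv in *. lra.
Qed.

Lemma Gamma_integrand_plus_2 x t : 0 < t ->
  Gamma_integrand (x + 2) t = t ^ 2 * Gamma_integrand x t.
Proof.
  intros Ht. unfold Gamma_integrand. replace (x + 2 - 1) with (x - 1 + INR 2) by (simpl; ring).
  rewrite Rpower_plus_INR by exact Ht. ring.
Qed.

Lemma RInt_gauss_integrand_bounds x n e : 0 < x -> (1 <= n)%nat -> 0 < e <= INR n ->
  RInt (gauss_integrand x n) e (INR n) <= RInt (Gamma_integrand x) e (INR n) <=
  RInt (gauss_integrand x n) e (INR n) + / INR n * RInt (Gamma_integrand (x + 2)) e (INR n).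
Proof.
  intros Hx Hn He. assert (Hn0 : 0 < INR n) by (apply lt_0_INR; lia).
  assert (Hg : ex_RInt (gauss_integrand x n) e (INR n)).
  { apply (ex_RInt_continuous (V := R_CompleteNormedModule)). intros z Hz.
    rewrite Rmin_left in Hz by lra. apply gauss_integrand_cont; [exact Hn | lra]. }
  assert (Hf : forall y, ex_RInt (Gamma_integrand y) e (INR n))
    by (intros; apply ex_RInt_Gamma_integrand; lra).
  split.
  - apply RInt_le; auto; [lra|]. intros t Ht. unfold gauss_integrand, Gamma_integrand.
    apply Rmult_le_compat_l; [apply Rlt_le, Rpower_pos|]. apply exp_neg_approx; [exact Hn | lra].
  - assert (HI : is_RInt (fun t => gauss_integrand x n t + / INR n * Gamma_integrand (x + 2) t)
                   e (INR n) (RInt (gauss_integrand x n) e (INR n) +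
                              / INR n * RInt (Gamma_integrand (x + 2)) e (INR n))).
    { apply (is_RInt_plus (V := R_NormedModule));
        [apply (RInt_correct (V := R_CompleteNormedModule)), Hg|].
      apply (is_RInt_scal (V := R_NormedModule)).
      apply (RInt_correct (V := R_CompleteNormedModule)), Hf. }
    rewrite <- (is_RInt_unique _ _ _ _ HI).
    apply RInt_le; [lra | apply Hf | eexists; exact HI |].
    intros t Ht. rewrite Gamma_integrand_plus_2 by lra. unfold gauss_integrand, Gamma_integrand.
    destruct (exp_neg_approx n t Hn ltac:(lra)) as [_ Happrox].
    pose proof (Rpower_pos t (x - 1)).
    assert (Rpower t (x - 1) * (exp (- t) - (1 - t / INR n) ^ n) <=
            Rpower t (x - 1) * (t ^ 2 * exp (- t) / INR n)) by (apply Rmult_le_compat_l; lra).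
    unfold Rdiv in *. nra.
Qed.

(* [gauss_seq x n] is [int_0^n t^(x-1) (1 - t/n)^n dt], and [(1 - t/n)^n] approximates
   [e^-t] within [t^2 e^-t / n]. *)
Lemma Gamma_Gauss_limit x : 0 < x -> is_lim_seq (gauss_seq x) (Gamma x).
Proof.
  intros Hx. apply is_lim_seq_spec. intros eps. set (r := eps / 3).
  assert (Hr : 0 < r) by (unfold r; pose proof (cond_pos eps); lra).
  destruct (Gamma_is_sup x Hx) as [Hsup Happrox].
  destruct (Gamma_is_sup (x + 2) ltac:(lra)) as [Hsup2 _].
  destruct (Happrox r Hr) as [e0 [M0 [He0 [HeM HGe0]]]].
  destruct (INR_unbounded (Rmax (Rmax M0 1) (Gamma (x + 2) / r))) as [N HN].
  exists N. intros n Hn. apply le_INR in Hn.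
  pose proof (Rmax_l (Rmax M0 1) (Gamma (x + 2) / r)).
  pose proof (Rmax_r (Rmax M0 1) (Gamma (x + 2) / r)).
  pose proof (Rmax_l M0 1). pose proof (Rmax_r M0 1).
  assert (Hn1 : (1 <= n)%nat) by (destruct n; [simpl in Hn; lra | lia]).
  assert (Hn0 : 0 < INR n) by lra.
  destruct (gauss_antideriv_near_0 x n Hx Hn1 r Hr) as [e1 [He1 Hsmall]].
  set (e := Rmin e0 e1).
  assert (He : 0 < e) by (apply Rmin_glb_lt; lra).
  assert (e <= e0) by apply Rmin_l. assert (e <= e1) by apply Rmin_r.
  assert (Hlow : Gamma x - r < RInt (Gamma_integrand x) e (INR n)).
  { eapply Rlt_le_trans; [exact HGe0|].
    apply (RInt_widen _ (Gamma_integrand_cont x) (fun t _ => Gamma_integrand_nonneg x t)); lra. }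
  assert (Hup : RInt (Gamma_integrand x) e (INR n) <= Gamma x) by (apply Hsup; lra).
  destruct (RInt_gauss_integrand_bounds x n e Hx Hn1 ltac:(lra)) as [Hg1 Hg2].
  assert (Hrem : / INR n * RInt (Gamma_integrand (x + 2)) e (INR n) < r).
  { apply Rle_lt_trans with (/ INR n * Gamma (x + 2)).
    - apply Rmult_le_compat_l; [apply Rlt_le, Rinv_0_lt_compat, Hn0 | apply Hsup2; lra].
    - apply Rmult_lt_reg_l with (INR n); [exact Hn0|]. rewrite <- Rmult_assoc, Rinv_r by lra.
      replace (Gamma (x + 2)) with (Gamma (x + 2) / r * r) at 1 by (field; lra). nra. }
  assert (Hftc : RInt (gauss_integrand x n) e (INR n) =
                 gauss_antideriv x n (INR n) - gauss_antideriv x n e).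
  { apply RInt_is_derive; [lra | intros t Ht; apply is_derive_gauss_antideriv; lra |].
    intros t Ht. apply gauss_integrand_cont; [exact Hn1 | lra]. }
  specialize (Hsmall e ltac:(lra)). apply Rabs_le_between in Hsmall.
  rewrite <- gauss_antideriv_at_n by assumption.
  apply Rabs_lt_between'. unfold r in *. lra.
Qed.

(** * Completely monotone sequences and exponential series *)

Lemma fact_pos k : 0 < INR (fact k).
Proof. apply lt_0_INR, lt_O_fact. Qed.

Lemma CV_radius_fact_bound (u : nat -> R) M :
  (forall k, Rabs (u k) <= M / INR (fact k)) -> CV_radius u = p_infty.
Proof.
  intros Hu. destruct (CV_radius_bounded u) as [Hub _].
  assert (HM : 0 <= M).
  { specialize (Hu O). pose proof (Rabs_pos (u O)). simpl in Hu. lra. }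
  assert (Hall : forall r : R, Rbar_le r (CV_radius u)).
  { intros r. apply Hub. exists (M * exp (Rabs r)). intros n.
    rewrite Rabs_mult, <- RPow_abs.
    pose proof (fact_pos n). pose proof (Rabs_pos (u n)). pose proof (pow_le _ n (Rabs_pos r)).
    assert (Hexp : Rabs r ^ n / INR (fact n) <= exp (Rabs r)).
    { eapply Rle_trans; [|apply (exp_ge_taylor (Rabs r) n), Rabs_pos].
      rewrite sum_f_R0_rsum, rsum_S.
      assert (0 <= rsum (fun k => Rabs r ^ k / INR (fact k)) n); [|lra].
      apply rsum_nonneg. intros k _.
      apply Rdiv_le_0_compat; [apply pow_le, Rabs_pos | apply fact_pos]. }
    apply Rle_trans with (M / INR (fact n) * Rabs r ^ n); [apply Rmult_le_compat_r; auto|].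
    replace (M / INR (fact n) * Rabs r ^ n) with (M * (Rabs r ^ n / INR (fact n))) by (field; lra).
    apply Rmult_le_compat_l; auto. }
  destruct (CV_radius u) as [y| |]; [|reflexivity|].
  - specialize (Hall (y + 1)). simpl in Hall. lra.
  - specialize (Hall 0). contradiction.
Qed.

Definition cm_sequence (c : nat -> R) : Prop := forall m k, 0 <= fdiff m c k.

Section CompletelyMonotoneSeries.

Variable c : nat -> R.
Hypothesis Hc : cm_sequence c.

Lemma cm_sequence_bounds k : 0 <= c k <= c O.
Proof.
  split; [apply (Hc O k)|]. induction k; [lra|].
  pose proof (Hc 1%nat k). simpl in H. lra.
Qed.

Lemma CV_radius_cm_sequence n :
  CV_radius (fun k => (-1) ^ k * (c (k + n) / INR (fact k))) = p_infty.
Proof.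
  apply (CV_radius_fact_bound _ (c O)). intros k.
  rewrite Rabs_mult, pow_1_abs, Rmult_1_l, Rabs_right.
  - apply Rmult_le_compat_r; [apply Rlt_le, Rinv_0_lt_compat, fact_pos | apply cm_sequence_bounds].
  - apply Rle_ge, Rdiv_le_0_compat; [apply cm_sequence_bounds | apply fact_pos].
Qed.

Lemma PS_mult_fdiff n :
  PS_mult (fun k => (-1) ^ k * (c (k + n) / INR (fact k))) (fun k => / INR (fact k)) =
  fun m => fdiff m c n / INR (fact m).
Proof.
  apply functional_extensionality. intros m. unfold PS_mult.
  rewrite sum_f_R0_rsum, fdiff_binomial. unfold Rdiv at 2. rewrite Rmult_comm, <- rsum_scal_l.
  apply rsum_ext. intros j Hj. unfold Binomial.C. rewrite Nat.add_comm.
  pose proof (fact_pos m). pose proof (fact_pos j). pose proof (fact_pos (m - j)).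
  field. lra.
Qed.

(* [e^x] times [(-1)^n] times the [n]-th derivative at [-x] is the power series with
   coefficients [fdiff m c n / m!], which are nonnegative. *)
Lemma PSeries_derive_n_nonneg n x : 0 < x ->
  0 <= PSeries (PS_derive_n n (fun k => c k / INR (fact k))) (- x).
Proof.
  intros Hx. set (d := fun k => (-1) ^ k * (c (k + n) / INR (fact k))).
  assert (Hinf : forall a, CV_radius a = p_infty -> Rbar_lt (Rabs x) (CV_radius a))
    by (intros a Ha; rewrite Ha; exact I).
  assert (Hexp : CV_radius (fun k => / INR (fact k)) = p_infty).
  { apply (CV_radius_fact_bound _ 1). intros k. rewrite Rabs_right; [unfold Rdiv; lra|].
    apply Rle_ge, Rlt_le, Rinv_0_lt_compat, fact_pos. }
  replace (PSeries (PS_derive_n n _) (- x)) with (PSeries d x).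
  2:{ apply Series_ext. intros k. unfold d, PS_derive_n.
      replace (- x) with (-1 * x) by ring. rewrite Rpow_mult_distr.
      pose proof (fact_pos (k + n)). pose proof (fact_pos k). field. lra. }
  assert (Hprod : PSeries d x * exp x = PSeries (fun m => fdiff m c n / INR (fact m)) x).
  { unfold d. rewrite exp_Reals, <- PSeries_mult, PS_mult_fdiff;
      [reflexivity | apply Hinf, CV_radius_cm_sequence | apply Hinf, Hexp]. }
  assert (Hnonneg : 0 <= PSeries (fun m => fdiff m c n / INR (fact m)) x).
  { replace 0 with (Series (fun _ => 0 * 0)) by (rewrite Series_scal_l; ring).
    apply Series_le.
    - intros m. split; [lra|]. rewrite Rmult_0_l. apply Rmult_le_pos; [|apply pow_le; lra].
      apply Rdiv_le_0_compat; [apply Hc | apply fact_pos].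
    - apply ex_series_ext with (fun k => scal (pow_n x k) (PS_mult d (fun k => / INR (fact k)) k)).
      + intros k. unfold d. rewrite PS_mult_fdiff, pow_n_pow. apply Rmult_comm.
      + apply ex_pseries_mult; [apply Hinf, CV_radius_cm_sequence | apply Hinf, Hexp]. }
  pose proof (exp_pos x). nra.
Qed.

Lemma completely_monotonic_exp_series :
  completely_monotonic_pos (fun z => Series (fun k => c k * (- z) ^ k / INR (fact k))).
Proof.
  set (a := fun k => c k / INR (fact k)).
  assert (Ha : CV_radius a = p_infty).
  { apply (CV_radius_fact_bound _ (c O)). intros k. unfold a.
    pose proof (fact_pos k). pose proof (cm_sequence_bounds k).
    rewrite Rabs_right by (apply Rle_ge, Rdiv_le_0_compat; lra).
    apply Rmult_le_compat_r; [apply Rlt_le, Rinv_0_lt_compat|]; lra. }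
  assert (Hin : forall y, Rbar_lt (Rabs y) (CV_radius a)) by (intros y; rewrite Ha; exact I).
  replace (fun z => Series (fun k => c k * (- z) ^ k / INR (fact k)))
    with (fun z => PSeries a (- z)).
  2:{ apply functional_extensionality. intros z. apply Series_ext. intros k. unfold a, Rdiv. ring. }
  assert (HD : forall n z, Derive_n (fun z => PSeries a (- z)) n z =
                           (-1) ^ n * PSeries (PS_derive_n n a) (- z)).
  { intros n z. rewrite Derive_n_comp_opp; [now rewrite Derive_n_PSeries by apply Hin|].
    apply filter_forall. intros y k _. apply ex_derive_n_PSeries, Hin. }
  intros n x Hx. split.
  - apply ex_derive_ext with (fun z => (-1) ^ n * PSeries (PS_derive_n n a) (- z));
      [intros; now rewrite HD|].
    apply ex_derive_scal, (ex_derive_comp (PSeries (PS_derive_n n a)) (fun z => - z)).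
    + apply ex_derive_PSeries. rewrite CV_radius_derive_n. apply Hin.
    + exists (-1). auto_derive; [exact I | ring].
  - rewrite HD, <- Rmult_assoc, <- pow_add. replace (n + n)%nat with (2 * n)%nat by lia.
    rewrite pow_1_even, Rmult_1_l. apply PSeries_derive_n_nonneg, Hx.
Qed.

End CompletelyMonotoneSeries.

Lemma exists_common_lower_bound p (a b : nat -> R) :
  (forall i, (i < p)%nat -> 0 < a i) -> (forall i, (i < p)%nat -> 0 < b i) ->
  exists d, 0 < d /\ (forall i, (i < p)%nat -> d < a i) /\ (forall i, (i < p)%nat -> d < b i).
Proof.
  induction p as [|p IH]; intros Ha Hb.
  - exists 1. repeat split; [lra | intros; lia | intros; lia].
  - destruct IH as [d [Hd [Hda Hdb]]]; auto.
    specialize (Ha p (le_n _)). specialize (Hb p (le_n _)).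
    exists (Rmin d (Rmin (a p / 2) (b p / 2))).
    pose proof (Rmin_l d (Rmin (a p / 2) (b p / 2))).
    pose proof (Rmin_r d (Rmin (a p / 2) (b p / 2))).
    pose proof (Rmin_l (a p / 2) (b p / 2)). pose proof (Rmin_r (a p / 2) (b p / 2)).
    split; [apply Rmin_glb_lt; [|apply Rmin_glb_lt]; lra|].
    split; intros i Hi; destruct (Nat.eq_dec i p) as [->|Hip]; try lra;
      [specialize (Hda i ltac:(lia)) | specialize (Hdb i ltac:(lia))]; lra.
Qed.

Lemma gauss_seq_ratio N a b s : 0 < a + s -> 0 < b + s -> (1 <= N)%nat ->
  gauss_seq (a + s) N / gauss_seq (b + s) N =
  Rpower (INR N) a / Rpower (INR N) b * rprod (fun j => (b + INR j + s) / (a + INR j + s)) (S N).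
Proof.
  intros Ha Hb HN. unfold gauss_seq. rewrite !Rpower_plus.
  assert (Hpa : forall j, 0 < a + s + INR j) by (intros j; pose proof (pos_INR j); lra).
  assert (Hpb : forall j, 0 < b + s + INR j) by (intros j; pose proof (pos_INR j); lra).
  rewrite (rprod_ext (fun j => (b + INR j + s) / (a + INR j + s))
                     (fun j => (b + s + INR j) * / (a + s + INR j)))
    by (intros j _; unfold Rdiv; f_equal; [ring | f_equal; ring]).
  rewrite rprod_mult, rprod_inv by auto.
  pose proof (rprod_pos (fun j => a + s + INR j) (S N) (fun j _ => Hpa j)).
  pose proof (rprod_pos (fun j => b + s + INR j) (S N) (fun j _ => Hpb j)).
  pose proof (fact_pos N).
  pose proof (Rpower_pos (INR N) a). pose proof (Rpower_pos (INR N) b).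
  pose proof (Rpower_pos (INR N) s).
  field. repeat split; lra.
Qed.

Lemma cm_sequence_Gamma_ratio p A (alpha beta : nat -> R) :
  0 < A ->
  (forall i, (i < p)%nat -> 0 < alpha i) ->
  (forall i, (i < p)%nat -> 0 < beta i) ->
  (forall i, (i + 1 < p)%nat -> beta i <= beta (i + 1)%nat) ->
  (forall k, (1 <= k <= p)%nat -> rsum beta k - rsum alpha k >= 0) ->
  cm_sequence
    (fun k => rprod (fun i => Gamma (alpha i + INR k * A) / Gamma (beta i + INR k * A)) p).
Proof.
  intros HA Ha Hb Hbs Hs m k.
  destruct (exists_common_lower_bound p alpha beta Ha Hb) as [d [Hd [Hda Hdb]]].
  assert (HkA : forall k, 0 <= INR k * A) by (intros; apply Rmult_le_pos; [apply pos_INR | lra]).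
  set (h := fun N k =>
    rprod (fun i => gauss_seq (alpha i + INR k * A) N / gauss_seq (beta i + INR k * A) N) p).
  assert (Hlim : forall k, is_lim_seq (fun N => h N k)
                   (rprod (fun i => Gamma (alpha i + INR k * A) / Gamma (beta i + INR k * A)) p)).
  { intros k'. apply is_lim_seq_rprod. intros i Hi.
    specialize (Ha i Hi). specialize (Hb i Hi). specialize (HkA k').
    apply is_lim_seq_div'; [apply Gamma_Gauss_limit; lra | apply Gamma_Gauss_limit; lra |].
    apply Rgt_not_eq, Gamma_pos. lra. }
  assert (Hpos : forall N, 0 <= fdiff m (h (S N)) k).
  { intros N.
    set (KN := rprod (fun i => Rpower (INR (S N)) (alpha i) / Rpower (INR (S N)) (beta i)) p).
    rewrite (fdiff_ext m _ (fun i => KN * gauss_prod p (S N) alpha beta O (INR i * A))).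
    - rewrite fdiff_scal. apply Rmult_le_pos.
      + apply Rlt_le, rprod_pos. intros i _. apply Rdiv_lt_0_compat; apply Rpower_pos.
      + apply (fdiff_gauss_prod_nonneg p (S N) alpha beta d); auto.
    - intros i. unfold h, KN. rewrite gauss_prod_0, <- rprod_swap, <- rprod_mult.
      apply rprod_ext. intros j Hj. specialize (Ha j Hj). specialize (Hb j Hj). specialize (HkA i).
      apply gauss_seq_ratio; [lra | lra | lia]. }
  assert (Hcv := is_lim_seq_fdiff m h _ k Hlim). apply is_lim_seq_incr_1 in Hcv.
  exact (is_lim_seq_le (fun _ => 0) _ 0 _ Hpos (is_lim_seq_const 0) Hcv).
Qed.

Theorem theorem2 (p : nat) (A : R) (alpha beta : nat -> R) :
  0 < A ->
  (forall i, (i < p)%nat -> 0 < alpha i) ->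
  (forall i, (i < p)%nat -> 0 < beta i) ->
  (forall i, (i + 1 < p)%nat -> alpha i <= alpha (i + 1)%nat) ->
  (forall i, (i + 1 < p)%nat -> beta i <= beta (i + 1)%nat) ->
  (forall k, (1 <= k <= p)%nat -> rsum beta k - rsum alpha k >= 0) ->
  rsum (fun j => beta j - alpha j) p > 0 ->
  completely_monotonic_pos (fun z => FoxWright p A alpha beta (- z)).
Proof.
  intros HA Ha Hb _ Hbs Hs _.
  apply completely_monotonic_exp_series, cm_sequence_Gamma_ratio; assumption.
Qed.
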